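(* Consider Algorithm B on an input whose optimal offline makespan is $1$, and suppose job $j$ is handled by Step 5 with $p_j+p^{\max Y}_j\le 1.25$. Let $\gamma_j=y_{j-1}+p_j-1.25$. Then the set $W$ chosen in Step 5 satisfies $\gamma_j\le w_j\le 0.75\,p_j$ and $w_j<0.5$; after $j$ is handled both machine loads are at most $1.25$; and if afterwards $m_1$ receives only jobs of GoS $1$, its load remains at most $1.25$.
   Context: Model (two hierarchical machines with migration). Jobs $1,2,\dots,n$ arrive one by one. Job $j$ has a size $p_j>0$ and a grade of service (GoS) $g_j\in\{1,2\}$; a job of GoS $1$ may only be processed on machine $m_1$, a job of GoS $2$ on $m_1$ or $m_2$. When job $j$ arrives, the algorithm assigns it and may migrate previously arrived jobs of total size at most $M\cdot p_j$. Bin stretching: the optimal offline makespan of the complete input is $1$ and is known in advance. Notation: $Y_{j}$ is the set of jobs on $m_2$ just after job $j$ has been handled (including migrations), $y_j$ its total size, $y_0=0$. $p^{\max Y}_j$ and $p^{\max Y,2}_j$ are the largest and second largest sizes of jobs in $Y_{j-1}$ (each defined as $0$ if it does not exist), and $j^{\max Y}$ is a job of $Y_{j-1}$ of size $p^{\max Y}_j$. ''Sorted $Y_{j-1}$'' means the jobs of $Y_{j-1}$ listed in non-increasing order of size; $w_j$ denotes the total size of the set $W$ chosen when handling $j$. Algorithm B. On arrival of job $j$: Step 2: if $g_j=1$ or $y_{j-1}\ge 0.75$, assign $j$ to $m_1$. Step 3: else if $y_{j-1}+p_j\le 1.25$, assign $j$ to $m_2$. Step 4: else if $p_j\ge 0.75$: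 let $W$ be the longest prefix of sorted $Y_{j-1}$ with total size at most $0.75p_j$ (possibly empty). If $y_{j-1}-w_j+p_j>1.25$, assign $j$ to $m_1$ (no migration); otherwise migrate the jobs of $W$ to $m_1$ and assign $j$ to $m_2$. Step 5: else (so $p_j<0.75$): if $p_j+p^{\max Y}_j>1.25$, assign $j$ to $m_1$. Otherwise choose $W$ as follows: if $p^{\max Y}_j\ge y_{j-1}/2$, let $W=Y_{j-1}\setminus\{j^{\max Y}\}$; if $0.25\le p^{\max Y}_j<y_{j-1}/2$, let $W=\{j^{\max Y}\}$; if $p^{\max Y}_j<0.25$, let $W$ be the shortest prefix of sorted $Y_{j-1}$ with total size at least $0.25$ (or all of $Y_{j-1}$ if none exists), and if then $w_j>0.75p_j$ replace $W$ by $Y_{j-1}\setminus W$. Migrate the jobs of $W$ to $m_1$ and assign $j$ to $m_2$. *)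

From Stdlib Require Import Reals Lra List Sorted Permutation.
Import ListNotations.
Open Scope R_scope.

(* An input of n jobs is given by sizes p : nat -> R and grades of service
   g : nat -> nat; the jobs are 1, 2, ..., n (arrival order).
   A set of jobs is represented by a list of job indices. *)

Definition sumsz (p : nat -> R) (l : list nat) : R :=
  fold_right (fun i acc => p i + acc) 0 l.

Definition memb (i : nat) (l : list nat) : bool := existsb (Nat.eqb i) l.

Definition pmax (p : nat -> R) (l : list nat) : R :=
  fold_right (fun i acc => Rmax (p i) acc) 0 l.

Definition sorted_of (p : nat -> R) (Y s : list nat) : Prop :=
  Permutation s Y /\ Sorted (fun a b => p b <= p a) s.

Definition valid_input (n : nat) (p : nat -> R) (g : nat -> nat) : Prop :=
  forall i, (1 <= i <= n)%nat -> 0 < p i /\ (g i = 1%nat \/ g i = 2%nat).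

(* Offline schedules: a i = true means job i is on m2. *)
Definition feasible (n : nat) (g : nat -> nat) (a : nat -> bool) : Prop :=
  forall i, (1 <= i <= n)%nat -> g i = 1%nat -> a i = false.

Definition sched_load1 (n : nat) (p : nat -> R) (a : nat -> bool) : R :=
  sumsz p (filter (fun i => negb (a i)) (seq 1 n)).
Definition sched_load2 (n : nat) (p : nat -> R) (a : nat -> bool) : R :=
  sumsz p (filter (fun i => a i) (seq 1 n)).
Definition makespan (n : nat) (p : nat -> R) (a : nat -> bool) : R :=
  Rmax (sched_load1 n p a) (sched_load2 n p a).

Definition opt_is_one (n : nat) (p : nat -> R) (g : nat -> nat) : Prop :=
  (exists a, feasible n g a /\ makespan n p a = 1) /\
  (forall a, feasible n g a -> 1 <= makespan n p a).

(* Step 4: W is the longest prefix of sorted Y with total size at most 0.75 p_j *)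
Definition step4_W (p : nat -> R) (pj : R) (Y W : list nat) : Prop :=
  exists s k, sorted_of p Y s /\ (k <= length s)%nat /\
    W = firstn k s /\ sumsz p (firstn k s) <= 3/4 * pj /\
    (forall k', (k < k' <= length s)%nat -> sumsz p (firstn k' s) > 3/4 * pj).

Definition step5_W (p : nat -> R) (pj : R) (Y W : list nat) : Prop :=
  let y := sumsz p Y in
  let pm := pmax p Y in
  (* case p^maxY >= y/2 : W = Y \ {j^maxY} *)
  (pm >= y / 2 /\
     exists jm, In jm Y /\ p jm = pm /\ Permutation Y (jm :: W)) \/
  (1/4 <= pm < y / 2 /\
     exists jm, In jm Y /\ p jm = pm /\ W = [jm]) \/
  (* case p^maxY < 0.25 : shortest prefix of sorted Y with total >= 0.25
     (or all of Y if none), complemented if its total exceeds 0.75 p_j *)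
  (pm < 1/4 /\
     exists s k, sorted_of p Y s /\ (k <= length s)%nat /\
       ((sumsz p (firstn k s) >= 1/4 /\
           forall k', (k' < k)%nat -> sumsz p (firstn k' s) < 1/4) \/
        ((forall k', (k' <= length s)%nat -> sumsz p (firstn k' s) < 1/4) /\
           k = length s)) /\
       ((sumsz p (firstn k s) <= 3/4 * pj /\ W = firstn k s) \/
        (sumsz p (firstn k s) > 3/4 * pj /\ W = skipn k s))).

Inductive decision : Type :=
  | DStep2                     (* Step 2: j to m1 *)
  | DStep3                     (* Step 3: j to m2 *)
  | DStep4stay                 (* Step 4: j to m1, no migration *)
  | DStep4mig (W : list nat)   (* Step 4: W migrated to m1, j to m2 *)
  | DStep5stay                 (* Step 5: p_j + p^maxY > 1.25, j to m1 *)
  | DStep5mig (W : list nat).  (* Step 5: W migrated to m1, j to m2 *)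

(* One step of Algorithm B on arrival of job j: Y is Y_{j-1}, Y' is Y_j. *)
Inductive stepB (p : nat -> R) (g : nat -> nat) (j : nat) (Y : list nat)
  : list nat -> decision -> Prop :=
  | st2 : (g j = 1%nat \/ sumsz p Y >= 3/4) -> stepB p g j Y Y DStep2
  | st3 : forall Y', g j <> 1%nat -> sumsz p Y < 3/4 ->
      sumsz p Y + p j <= 5/4 ->
      Permutation Y' (j :: Y) -> stepB p g j Y Y' DStep3
  | st4stay : forall W, g j <> 1%nat -> sumsz p Y < 3/4 ->
      sumsz p Y + p j > 5/4 -> p j >= 3/4 -> step4_W p (p j) Y W ->
      sumsz p Y - sumsz p W + p j > 5/4 -> stepB p g j Y Y DStep4stay
  | st4mig : forall W R Y', g j <> 1%nat -> sumsz p Y < 3/4 ->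
      sumsz p Y + p j > 5/4 -> p j >= 3/4 -> step4_W p (p j) Y W ->
      sumsz p Y - sumsz p W + p j <= 5/4 ->
      Permutation Y (W ++ R) -> Permutation Y' (j :: R) ->
      stepB p g j Y Y' (DStep4mig W)
  | st5stay : g j <> 1%nat -> sumsz p Y < 3/4 ->
      sumsz p Y + p j > 5/4 -> p j < 3/4 ->
      p j + pmax p Y > 5/4 -> stepB p g j Y Y DStep5stay
  | st5mig : forall W R Y', g j <> 1%nat -> sumsz p Y < 3/4 ->
      sumsz p Y + p j > 5/4 -> p j < 3/4 ->
      p j + pmax p Y <= 5/4 -> step5_W p (p j) Y W ->
      Permutation Y (W ++ R) -> Permutation Y' (j :: R) ->
      stepB p g j Y Y' (DStep5mig W).

(* A run of Algorithm B on jobs 1..n: Y k is the set of jobs on m2 just after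
   job k has been handled (Y 0 = empty), D k records how job k was handled. *)
Definition runB (n : nat) (p : nat -> R) (g : nat -> nat)
  (Y : nat -> list nat) (D : nat -> decision) : Prop :=
  Y 0%nat = [] /\
  forall k, (1 <= k <= n)%nat -> stepB p g k (Y (k - 1)%nat) (Y k) (D k).

Definition m1_jobs (Y : nat -> list nat) (k : nat) : list nat :=
  filter (fun i => negb (memb i (Y k))) (seq 1 k).

Definition load1 (p : nat -> R) (Y : nat -> list nat) (k : nat) : R :=
  sumsz p (m1_jobs Y k).
Definition load2 (p : nat -> R) (Y : nat -> list nat) (k : nat) : R :=
  sumsz p (Y k).

(* Step 5 only fires when y_{j-1} + p_j > 1.25 while p_j and every job of
   Y_{j-1} are small, and each of its three choices of W has w_j < 0.5 and
   w_j <= 0.75 p_j; with gamma_j <= w_j this pins the new load of m2 into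
   (0.75, 1.25].  Since OPT = 1 the total size is at most 2, so m1 carries at
   most 2 - y_j < 1.25.  If afterwards m1 only receives GoS-1 jobs, no job can
   migrate off m2 (those jobs have GoS 2), so y never decreases and the bound
   on m1 persists. *)

From Stdlib Require Import Reals List.
From Stdlib Require Import Lra Lia Permutation.
Import ListNotations.
Open Scope R_scope.

Lemma sumsz_cons p a l : sumsz p (a :: l) = p a + sumsz p l.
Proof. reflexivity. Qed.

Lemma sumsz_app p l1 l2 : sumsz p (l1 ++ l2) = sumsz p l1 + sumsz p l2.
Proof.
  induction l1 as [|a l1 IH]; simpl; [lra|].
  rewrite IH; lra.
Qed.

Lemma sumsz_perm p l l' : Permutation l l' -> sumsz p l = sumsz p l'.
Proof. induction 1; simpl in *; lra. Qed.

Lemma sumsz_filter p (f : nat -> bool) l :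
  sumsz p l = sumsz p (filter f l) + sumsz p (filter (fun x => negb (f x)) l).
Proof.
  induction l as [|a l IH]; simpl; [lra|].
  destruct (f a); simpl; lra.
Qed.

Lemma sumsz_nonneg p l : (forall i, In i l -> 0 <= p i) -> 0 <= sumsz p l.
Proof.
  induction l as [|a l IH]; intro Hp; simpl; [lra|].
  assert (0 <= p a) by (apply Hp; left; reflexivity).
  assert (0 <= sumsz p l) by (apply IH; intros i Hi; apply Hp; right; exact Hi).
  lra.
Qed.

Lemma sumsz_firstn_S p s k : (k < length s)%nat ->
  sumsz p (firstn (S k) s) = sumsz p (firstn k s) + p (nth k s 0%nat).
Proof.
  revert k; induction s as [|a s IH]; intros k Hk; simpl in Hk; [lia|].
  destruct k as [|k]; simpl; [lra|].
  simpl in IH; rewrite IH by lia; lra.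
Qed.

Lemma pmax_ge p l i : In i l -> p i <= pmax p l.
Proof.
  induction l as [|a l IH]; intros Hi; [destruct Hi|]; simpl.
  destruct Hi as [<- | Hi]; [apply Rmax_l|].
  eapply Rle_trans; [apply IH, Hi | apply Rmax_r].
Qed.

Lemma memb_In i l : memb i l = true <-> In i l.
Proof.
  unfold memb; rewrite existsb_exists; split.
  - intros [x [Hx Hix]]; apply Nat.eqb_eq in Hix; subst; exact Hx.
  - intro Hi; exists i; split; [exact Hi | apply Nat.eqb_refl].
Qed.

Lemma In_m1_jobs Y k i : In i (m1_jobs Y k) <-> (1 <= i <= k)%nat /\ ~ In i (Y k).
Proof.
  unfold m1_jobs; rewrite filter_In, in_seq, Bool.negb_true_iff, <- memb_In.
  destruct (memb i (Y k)); split; intros [Hr Hm]; (split; [lia | congruence]).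
Qed.

Lemma step5_W_bounds p pj Y W :
  sumsz p Y < 3/4 -> sumsz p Y + pj > 5/4 -> pj < 3/4 -> pj + pmax p Y <= 5/4 ->
  step5_W p pj Y W ->
  sumsz p Y + pj - 5/4 <= sumsz p W /\ sumsz p W <= 3/4 * pj /\ sumsz p W < 1/2.
Proof.
  unfold step5_W; cbv zeta; intros Hy Hover Hpj Hpm
    [[Hc [jm [_ [Hjm HY]]]] | [[Hc [jm [_ [Hjm ->]]]] | [Hc [s [k [[Hs _] [Hk [Hsel HW]]]]]]]].
  - apply (sumsz_perm p) in HY; simpl in HY; lra.
  - simpl; lra.
  - assert (Hys : sumsz p s = sumsz p Y) by (apply sumsz_perm, Hs).
    assert (Hsplit : sumsz p (firstn k s) + sumsz p (skipn k s) = sumsz p s)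
      by (rewrite <- sumsz_app, firstn_skipn; reflexivity).
    destruct Hsel as [[Hge Hmin] | [Hall ->]].
    + destruct k as [|k]; [simpl in Hge; lra|].
      assert (Hlast : p (nth k s 0%nat) <= pmax p Y).
      { apply pmax_ge; eapply Permutation_in; [exact Hs | apply nth_In; lia]. }
      (* the shortest prefix reaching 1/4 exceeds it by less than one job < 1/4 *)
      assert (Hprev := Hmin k (Nat.lt_succ_diag_r k)).
      rewrite sumsz_firstn_S in * by lia.
      destruct HW as [[Hle ->] | [Hgt ->]]; [rewrite sumsz_firstn_S by lia|]; lra.
    + specialize (Hall (length s) (le_n _)); rewrite firstn_all in Hall.
      destruct HW as [[Hle ->] | [Hgt ->]]; rewrite ?firstn_all, ?skipn_all in *; simpl in *; lra.
Qed.

Lemma stepB_DStep5mig_bounds p g k Y Y' W :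
  stepB p g k Y Y' (DStep5mig W) ->
  (sumsz p Y + p k - 5/4 <= sumsz p W /\ sumsz p W <= 3/4 * p k /\ sumsz p W < 1/2) /\
  3/4 < sumsz p Y' <= 5/4.
Proof.
  intro Hst; inversion Hst as [| | | | |W' Rest Y'' _ Hy Hover Hpj Hpm HW HY HY']; subst.
  assert (Hb := step5_W_bounds _ _ _ _ Hy Hover Hpj Hpm HW).
  apply (sumsz_perm p) in HY; apply (sumsz_perm p) in HY'.
  rewrite sumsz_app in HY; rewrite sumsz_cons in HY'.
  split; [exact Hb | lra].
Qed.

Lemma stepB_keeps_or_migrates p g k Y Y' d : stepB p g k Y Y' d ->
  Y' = Y \/ exists W Rest, g k <> 1%nat /\ Permutation Y (W ++ Rest) /\ Permutation Y' (k :: Rest).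
Proof.
  destruct 1; try (left; reflexivity); right.
  - exists [], Y; auto.
  - do 2 eexists; eauto.
  - do 2 eexists; eauto.
Qed.

Definition total_size (p : nat -> R) (k : nat) : R := sumsz p (seq 1 k).

Lemma total_size_le_makespan n p a : total_size p n <= 2 * makespan n p a.
Proof.
  unfold total_size, makespan, sched_load1, sched_load2.
  rewrite (sumsz_filter p (fun i => a i) (seq 1 n)).
  set (l1 := sumsz p (filter (fun i => negb (a i)) (seq 1 n))).
  set (l2 := sumsz p (filter (fun i => a i) (seq 1 n))).
  assert (H1 := Rmax_l l1 l2); assert (H2 := Rmax_r l1 l2); lra.
Qed.

Lemma total_size_mono p a b : (a <= b)%nat ->
  (forall i, (a < i <= b)%nat -> 0 <= p i) -> total_size p a <= total_size p b.
Proof.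
  intros Hab Hp; unfold total_size.
  replace b with (a + (b - a))%nat by lia.
  rewrite seq_app, sumsz_app.
  assert (0 <= sumsz p (seq (1 + a) (b - a))); [|lra].
  apply sumsz_nonneg; intros i Hi; apply in_seq in Hi; apply Hp; lia.
Qed.

Definition m2_jobs_ok (g : nat -> nat) (L : list nat) (k : nat) : Prop :=
  NoDup L /\ forall i, In i L -> (1 <= i <= k)%nat /\ g i <> 1%nat.

Lemma load1_add_load2 p Y k g : m2_jobs_ok g (Y k) k ->
  load1 p Y k + load2 p Y k = total_size p k.
Proof.
  intros [Hnd Hin]; unfold load1, load2, m1_jobs, total_size.
  rewrite (sumsz_filter p (fun i => memb i (Y k)) (seq 1 k)).
  assert (HY : Permutation (filter (fun i => memb i (Y k)) (seq 1 k)) (Y k)).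
  { apply NoDup_Permutation; [apply NoDup_filter, seq_NoDup | exact Hnd |].
    intro x; rewrite filter_In, in_seq, memb_In; split; [tauto|].
    intro Hx; split; [destruct (Hin x Hx); lia | exact Hx]. }
  rewrite (sumsz_perm p _ _ HY); lra.
Qed.

Section Run.

Variables (n : nat) (p : nat -> R) (g : nat -> nat).
Variables (Y : nat -> list nat) (D : nat -> decision).
Hypothesis Hrun : runB n p g Y D.

Lemma runB_m2_jobs_ok k : (k <= n)%nat -> m2_jobs_ok g (Y k) k.
Proof.
  destruct Hrun as [HY0 Hstep].
  induction k as [|k IH]; intro Hk.
  { rewrite HY0; split; [constructor | intros i []]. }
  destruct (IH ltac:(lia)) as [Hnd Hin].
  assert (Hst := Hstep (S k) ltac:(lia)); rewrite Nat.sub_succ, Nat.sub_0_r in Hst.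
  destruct (stepB_keeps_or_migrates _ _ _ _ _ _ Hst) as [-> | [W [Rest [Hg [HW HR]]]]].
  { split; [exact Hnd|]; intros i Hi; destruct (Hin i Hi); split; [lia | assumption]. }
  assert (HRY : forall i, In i Rest -> In i (Y k)).
  { intros i Hi; apply (Permutation_in _ (Permutation_sym HW)), in_or_app; right; exact Hi. }
  split.
  - apply (Permutation_NoDup (Permutation_sym HR)); constructor.
    + intro HkR; destruct (Hin _ (HRY _ HkR)); lia.
    + apply (NoDup_app_remove_l W), (Permutation_NoDup HW), Hnd.
  - intros i Hi; apply (Permutation_in _ HR) in Hi; destruct Hi as [<- | Hi].
    + split; [lia | exact Hg].
    + destruct (Hin _ (HRY _ Hi)); split; [lia | assumption].
Qed.

Lemma runB_load_sum_le k : opt_is_one n p g -> valid_input n p g -> (k <= n)%nat ->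
  load1 p Y k + load2 p Y k <= 2.
Proof.
  intros [[a [_ Hmk]] _] Hv Hk.
  rewrite (load1_add_load2 p Y k g (runB_m2_jobs_ok k Hk)).
  assert (Hmono : total_size p k <= total_size p n).
  { apply total_size_mono; [exact Hk|]; intros i Hi; left; apply Hv; lia. }
  assert (Htot := total_size_le_makespan n p a); lra.
Qed.

(* A job migrating off m2 would be a GoS-2 job newly arriving on m1. *)
Lemma runB_load2_step_mono k : (1 <= k <= n)%nat -> 0 < p k ->
  (forall i, In i (m1_jobs Y k) -> ~ In i (m1_jobs Y (k - 1)) -> g i = 1%nat) ->
  load2 p Y (k - 1) <= load2 p Y k.
Proof.
  intros Hk Hpk Hnew; unfold load2.
  assert (Hst := proj2 Hrun k Hk).
  destruct (stepB_keeps_or_migrates _ _ _ _ _ _ Hst) as [-> | [W [Rest [_ [HW HR]]]]]; [lra|].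
  destruct (runB_m2_jobs_ok (k - 1) ltac:(lia)) as [Hnd Hin].
  destruct W as [|i W].
  - rewrite (sumsz_perm p _ _ HW), (sumsz_perm p _ _ HR); simpl; lra.
  - exfalso.
    assert (Hi : In i (Y (k - 1))) by (apply (Permutation_in _ (Permutation_sym HW)); left; auto).
    destruct (Hin i Hi) as [Hik Hgi]; apply Hgi, Hnew.
    + apply In_m1_jobs; split; [lia|].
      intro HiY; apply (Permutation_in _ HR) in HiY; destruct HiY as [Hki | HiR]; [lia|].
      assert (Hnd' := Permutation_NoDup HW Hnd); inversion Hnd' as [|? ? Hni]; subst.
      apply Hni, in_or_app; right; exact HiR.
    + rewrite In_m1_jobs; tauto.
Qed.

Lemma runB_load2_mono j k : valid_input n p g -> (1 <= j <= k)%nat -> (k <= n)%nat ->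
  (forall k', (j < k' <= n)%nat -> forall i,
     In i (m1_jobs Y k') -> ~ In i (m1_jobs Y (k' - 1)) -> g i = 1%nat) ->
  load2 p Y j <= load2 p Y k.
Proof.
  intros Hv Hjk Hkn Hnew.
  induction k as [|k IH]; [lia|].
  destruct (Nat.eq_dec j (S k)) as [-> | Hne]; [lra|].
  eapply Rle_trans; [apply IH; lia|].
  assert (Hstep := runB_load2_step_mono (S k) ltac:(lia) ltac:(apply Hv; lia)
                     ltac:(apply Hnew; lia)).
  rewrite Nat.sub_succ, Nat.sub_0_r in Hstep; exact Hstep.
Qed.

End Run.

Theorem mainTheorem8 (n : nat) (p : nat -> R) (g : nat -> nat)
  (Y : nat -> list nat) (D : nat -> decision) (j : nat) (W : list nat) :
  valid_input n p g ->
  opt_is_one n p g ->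
  runB n p g Y D ->
  (1 <= j <= n)%nat ->
  D j = DStep5mig W ->
  let gamma := sumsz p (Y (j - 1)%nat) + p j - 5/4 in
  (gamma <= sumsz p W /\ sumsz p W <= 3/4 * p j /\ sumsz p W < 1/2) /\
  (load1 p Y j <= 5/4 /\ load2 p Y j <= 5/4) /\
  ((forall k, (j < k <= n)%nat -> forall i,
       In i (m1_jobs Y k) -> ~ In i (m1_jobs Y (k - 1)%nat) -> g i = 1%nat) ->
   forall k, (j <= k <= n)%nat -> load1 p Y k <= 5/4).
Proof.
  intros Hv Hopt Hrun Hj HD; cbv zeta.
  assert (Hst := proj2 Hrun j Hj); rewrite HD in Hst.
  destruct (stepB_DStep5mig_bounds _ _ _ _ _ _ Hst) as [HW [Hy_lo Hy_hi]].
  fold (load2 p Y j) in Hy_lo, Hy_hi.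
  assert (Hsum_j := runB_load_sum_le _ _ _ _ _ Hrun j Hopt Hv ltac:(lia)).
  split; [exact HW|]; split; [lra|].
  intros Hnew k Hk.
  assert (Hsum_k := runB_load_sum_le _ _ _ _ _ Hrun k Hopt Hv ltac:(lia)).
  assert (Hmono := runB_load2_mono _ _ _ _ _ Hrun j k Hv ltac:(lia) ltac:(lia) Hnew).
  lra.
Qed.
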